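(* Let $B_1,\dots,B_n$ be components with pairwise disjoint action sets and $\gamma$ a set of interactions over them. For each $i$ let $\mathit{CI}(B_i^h)$ be the component invariant of $B_i^h$, and let $\mathit{II}(\gamma)$ be the interaction invariant. Then $\Phi=\exists\mathcal{H}_A.\big(\bigwedge_i\mathit{CI}(B_i^h)\wedge\mathit{II}(\gamma)\wedge\mathcal{E}(\gamma)\big)$ is an invariant of $\|_\gamma B_i$, where $\mathcal{H}_A$ is the set of all history clocks $h_0$ and $h_a$, $a\in\bigcup_iA_i$.
   Context: Components and semantics: a component is a timed automaton $B=(L,A,\mathcal{X},T,\mathsf{tpc},s_0)$ with locations $L$, actions $A$, clocks $\mathcal{X}$, edges $(l,(a,g,r),l')\in T$ (action, clock-constraint guard, reset set), time progress conditions $\mathsf{tpc}(l)$ (conjunctions of $x\le ct$), initial configuration $s_0=(l_0,c_0)$. States $(l,\mathbf{v})$, $\mathbf{v}$ a valuation in $\mathbb{R}_{\ge0}$; time transitions $(l,\mathbf{v})\xrightarrow{\delta}(l,\mathbf{v}+\delta)$ if $\mathsf{tpc}(l)$ holds along $[0,\delta]$; discrete transitions $(l,\mathbf{v})\xrightarrow{a}(l',\mathbf{v}[r])$ if $(l,(a,g,r),l')\in T$, $\mathbf{v}\models g$, $\mathbf{v}[r]\models\mathsf{tpc}(l')$; initial states $(l_0,\mathbf{v}_0)$ with $\mathbf{v}_0\models c_0$. A state predicate (boolean combination of location predicates $\mathit{at}(l)$ and clock constraints) is an invariant if it holds in every reachable state. Systems: for components $B_i$ with pairwise disjoint action sets $A_i$,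 an interaction is a nonempty $\alpha\subseteq\bigcup_iA_i$ with at most one action per component; $\mathit{Act}(\gamma)=\bigcup_{\alpha\in\gamma}\alpha$. $\|_\gamma B_i$ has locations $\times_iL_i$, clocks $\bigcup_i\mathcal{X}_i$, conjunction of tpc's and of initial constraints, and for each $\alpha=\{a_i\}_{i\in I}\in\gamma$ and edges $(l_i,(a_i,g_i,r_i),l'_i)\in T_i$ ($i\in I$) a joint edge with guard $\bigwedge_{i\in I}g_i$, reset $\bigcup_{i\in I}r_i$, moving exactly the components in $I$. History clocks: $B^h$ adds fresh clocks $h_0$ and $h_a$ ($a\in A$), adds $h_a$ to the resets of each edge labelled $a$, and has initial constraint $c_0\wedge h_0=0\wedge\bigwedge_{a\in A}h_a>0$. In $\|_\gamma B_i^h$, $h_0$ (never reset nor tested) is shared by all components. $\exists S.\Phi$ quantifies existentially over nonnegative real values of clocks in $S$. Invariants used: $\mathit{CI}(B^h)$ is the disjunction of $\mathit{at}(l)\wedge\zeta$ over all symbolic states $(l,\zeta)$ reachable in the (normalised) zone graph of $B^h$ from its initial symbolic state; it is an invariant of $B^h$. $\mathit{II}(\gamma)$ is a predicate over locations only (a conjunction of disjunctions of location predicates, obtained from initially marked traps of an associated Petri net) which is an invariant of $\|_\gamma B_i$. Interaction inequalities: $\gamma\ominus\alpha=\{\beta\setminus\alpha\mid\beta\in\gamma,\beta\not\subseteq\alpha\}$; $\mathcal{E}(\emptyset)=\mathit{true}$ and for $\gamma\ne\emptyset$, $\mathcal{E}(\gamma)=\bigvee_{\alpha\in\gamma}\Big(\bigwedge_{a_i,a_j\in\alpha}h_{a_i}=h_{a_j}\wedge\bigwedge_{a_i\in\alpha,\,a_k\in\mathit{Act}(\gamma\ominus\alpha)}h_{a_i}\le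 h_{a_k}\wedge\mathcal{E}(\gamma\ominus\alpha)\Big)$. *)

From mathcomp Require Import all_boot.
From Stdlib Require Import Reals ZArith.
From Stdlib Require List.

Set Implicit Arguments.
Unset Strict Implicit.
Unset Printing Implicit Defensive.

Inductive cmp := CLt | CLe | CEq | CGe | CGt.

Inductive constr (C : Type) : Type :=
| CTrue
| CAtom (x : C) (o : cmp) (k : nat)
| CAnd (g1 g2 : constr C).
Arguments CTrue {C}.

Definition valuation (C : Type) := C -> R.

Definition cmp_sat (o : cmp) (r k : R) : Prop :=
  match o with
  | CLt => (r < k)%R | CLe => (r <= k)%R | CEq => r = k
  | CGe => (k <= r)%R | CGt => (k < r)%R
  end.

Fixpoint sat (C : Type) (v : valuation C) (g : constr C) : Prop :=
  match g with
  | CTrue => True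
  | CAtom x o k => cmp_sat o (v x) (INR k)
  | CAnd g1 g2 => sat v g1 /\ sat v g2
  end.

Fixpoint cmap (C D : Type) (f : C -> D) (g : constr C) : constr D :=
  match g with
  | CTrue => CTrue
  | CAtom x o k => CAtom (f x) o k
  | CAnd g1 g2 => CAnd (cmap f g1) (cmap f g2)
  end.

Fixpoint consts (C : Type) (g : constr C) : seq (C * nat) :=
  match g with
  | CTrue => [::]
  | CAtom x _ k => [:: (x, k)]
  | CAnd g1 g2 => consts g1 ++ consts g2
  end.

Definition tpc_sat (C : Type) (t : seq (C * nat)) (v : valuation C) : Prop :=
  forall p, List.In p t -> (v p.1 <= INR p.2)%R.

Definition reset (C : eqType) (r : seq C) (v : valuation C) : valuation C :=
  fun x => if x \in r then 0%R else v x.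

Definition shift (C : Type) (v : valuation C) (d : R) : valuation C :=
  fun x => (v x + d)%R.

Definition nonneg (C : Type) (v : valuation C) : Prop := forall x, (0 <= v x)%R.

Record TA (C A : finType) := mkTA {
  loc : finType;
  edges : seq (loc * A * constr C * seq C * loc);
  tpc : loc -> seq (C * nat);
  l0 : loc;
  c0 : constr C }.
Arguments loc {C A} t.
Arguments edges {C A} t.
Arguments tpc {C A} t _.
Arguments l0 {C A} t.
Arguments c0 {C A} t.

(* History clocks: B^h has clocks  C + option A  where  inr None = h_0 *)
(* and inr (Some a) = h_a.                                              *)
Definition hist (C A : finType) (B : TA C A) : TA (C + option A)%type A :=
  @mkTA (C + option A)%type A (loc B)
    [seq (let: (l, a, g, r, l') := e in
          (l, a, cmap inl g, inr (Some a) :: map inl r, l')) | e <- edges B]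
    (fun l => [seq (inl p.1, p.2) | p <- tpc B l])
    (l0 B)
    (CAnd (cmap inl (c0 B))
       (CAnd (CAtom (inr None) CEq 0)
          (foldr (fun a g => CAnd (CAtom (inr (Some a)) CGt 0) g) CTrue (enum A)))).

(* Normalised zone graph.  Zones are represented semantically as sets  *)
(* of valuations; normalisation is the maximal-bound extrapolation      *)
(* Extra_M of the canonical DBM, expressed semantically: keep exactly  *)
(* the implied difference constraints  x - y < c / x - y <= c  with     *)
(* -M(y) <= c <= M(x)  (x,y clocks or the zero clock, M(0) = 0).        *)
Section ZoneGraph.
Variables (C A : finType) (B : TA C A).

Definition zone := valuation C -> Prop.

Definition all_consts : seq (C * nat) :=
  consts (c0 B) ++ flatten [seq consts e.1.1.2 | e <- edges B]
    ++ flatten [seq tpc B l | l <- enum (loc B)].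

Definition maxc (x : C) : nat :=
  foldr maxn 0 [seq p.2 | p <- all_consts & p.1 == x].

Definition maxco (o : option C) : nat :=
  match o with None => 0 | Some x => maxc x end.

Definition valo (v : valuation C) (o : option C) : R :=
  match o with None => 0%R | Some x => v x end.

Definition diffc (v : valuation C) (x y : option C) (c : Z) (strict : bool) : Prop :=
  if strict then (valo v x - valo v y < IZR c)%R
  else (valo v x - valo v y <= IZR c)%R.

Definition norm (Z0 : zone) : zone := fun v =>
  forall (x y : option C) (c : Z) (s : bool),
    (- Z.of_nat (maxco y) <= c <= Z.of_nat (maxco x))%Z ->
    (forall w, Z0 w -> diffc w x y c s) -> diffc v x y c s.

Definition elapse (l : loc B) (Z0 : zone) : zone := fun v' =>
  exists v d, Z0 v /\ (0 <= d)%R /\ (forall x, v' x = (v x + d)%R) /\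
    (d = 0%R \/ forall t, (0 <= t <= d)%R -> tpc_sat (tpc B l) (shift v t)).

Definition init_zone : zone := fun v => nonneg v /\ sat v (c0 B).

Definition disc_post (Z0 : zone) (g : constr C) (r : seq C) (l' : loc B) : zone :=
  fun v' => exists v, Z0 v /\ sat v g /\ (forall x, v' x = reset r v x) /\
    tpc_sat (tpc B l') v'.

Inductive zreach : loc B -> zone -> Prop :=
| zr_init : zreach (l0 B) (norm (elapse (l0 B) init_zone))
| zr_step l Z0 a g r l' :
    zreach l Z0 -> List.In (l, a, g, r, l') (edges B) ->
    zreach l' (norm (elapse l' (disc_post Z0 g r l'))).

(* CI : disjunction of at(l) /\ zeta over reachable symbolic states *)
Definition CI (l : loc B) (v : valuation C) : Prop :=
  exists Z0, zreach l Z0 /\ Z0 v.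

End ZoneGraph.
Arguments CI {C A} B l v.
Arguments zreach {C A} B _ _.
Arguments norm {C A} B Z0 _.
Arguments elapse {C A} B l Z0 _.
Arguments disc_post {C A} B Z0 g r l' _.

(* Systems: components B_i (i < n), with pairwise disjoint action sets *)
(* (and clock sets), encoded by tagging with the component index.       *)
Section System.
Variables (n : nat) (C A : 'I_n -> finType) (B : forall i, TA (C i) (A i)).

Definition Act := {i : 'I_n & A i}.
Definition Clk := {i : 'I_n & C i}.

Definition interaction (al : {set Act}) : Prop :=
  al != set0 /\
  forall i (a b : A i), Tagged A a \in al -> Tagged A b \in al -> a = b.

Definition gloc := forall i, loc (B i).

Definition restr (v : valuation Clk) (i : 'I_n) : valuation (C i) :=
  fun x => v (Tagged C x).
Arguments restr v i : clear implicits.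

Inductive creach (gamma : {set {set Act}}) : gloc -> valuation Clk -> Prop :=
| cr_init v : nonneg v -> (forall i, sat (restr v i) (c0 (B i))) ->
    creach gamma (fun i => l0 (B i)) v
| cr_time l v d : creach gamma l v -> (0 <= d)%R ->
    (forall t, (0 <= t <= d)%R ->
       forall i, tpc_sat (tpc (B i) (l i)) (restr (shift v t) i)) ->
    creach gamma l (shift v d)
| cr_act l v al (l' : gloc) (v' : valuation Clk) :
    creach gamma l v -> al \in gamma ->
    (forall i,
       (exists (a : A i) g r, Tagged A a \in al /\
          List.In (l i, a, g, r, l' i) (edges (B i)) /\
          sat (restr v i) g /\
          (forall x : C i, v' (Tagged C x) = reset r (restr v i) x))
       \/
       ((forall a : A i, Tagged A a \notin al) /\ l' i = l i /\
          (forall x : C i, v' (Tagged C x) = v (Tagged C x)))) ->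
    (forall i, tpc_sat (tpc (B i) (l' i)) (restr v' i)) ->
    creach gamma l' v'.

Definition is_invariant (gamma : {set {set Act}}) (P : gloc -> valuation Clk -> Prop) :=
  forall l v, creach gamma l v -> P l v.

(* Interaction is_invariant from initially marked traps of the Petri net *)
Definition jmove (gamma : {set {set Act}})
    (pre post : forall i, option (loc (B i))) : Prop :=
  exists2 al, al \in gamma &
    forall i, match pre i, post i with
      | Some l, Some l' => exists (a : A i) g r, Tagged A a \in al /\
                            List.In (l, a, g, r, l') (edges (B i))
      | None, None => forall a : A i, Tagged A a \notin al
      | _, _ => False
      end.

Definition is_trap (gamma : {set {set Act}}) (S : forall i, loc (B i) -> Prop) :=
  forall pre post, jmove gamma pre post ->
    (exists i l, pre i = Some l /\ S i l) ->
    exists i l', post i = Some l' /\ S i l'.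

Definition init_marked (S : forall i, loc (B i) -> Prop) :=
  exists i, S i (l0 (B i)).

Definition II (gamma : {set {set Act}}) (l : gloc) : Prop :=
  forall S, is_trap gamma S -> init_marked S -> exists i, S i (l i).

Definition acts (gamma : {set {set Act}}) : {set Act} := \bigcup_(b in gamma) b.

Definition ominus (gamma : {set {set Act}}) (al : {set Act}) : {set {set Act}} :=
  [set b :\: al | b in [set b in gamma | ~~ (b \subset al)]].

Inductive Ehold (h : Act -> R) : {set {set Act}} -> Prop :=
| E_empty : Ehold h set0
| E_pick (gamma : {set {set Act}}) (al : {set Act}) : al \in gamma ->
    (forall a b, a \in al -> b \in al -> h a = h b) ->
    (forall a b, a \in al -> b \in acts (ominus gamma al) -> (h a <= h b)%R) ->
    Ehold h (ominus gamma al) -> Ehold h gamma.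

Definition hist_val (v : valuation Clk) (hv : option Act -> R) (i : 'I_n)
  : valuation (C i + option (A i))%type :=
  fun z => match z with
           | inl x => v (Tagged C x)
           | inr None => hv None
           | inr (Some a) => hv (Some (Tagged A a))
           end.
Arguments hist_val v hv i : clear implicits.

Definition Phi (gamma : {set {set Act}}) (l : gloc) (v : valuation Clk) : Prop :=
  exists hv : option Act -> R, (forall c, (0 <= hv c)%R) /\
    (forall i, CI (hist (B i)) (l i) (hist_val v hv i)) /\
    II gamma l /\
    Ehold (fun a => hv (Some a)) gamma.

End System.
Arguments is_invariant {n C A} B gamma P.
Arguments Phi {n C A} B gamma l v.
Arguments creach {n C A} B gamma _ _.
Arguments II {n C A} B gamma l.
Arguments interaction {n A} al.

(* Along any run of the system the history clocks can be given explicit values: h_0 = 0 and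
   h_a = 1 initially, all of them advance with time, and executing an interaction alpha resets
   h_a for every a in alpha.  With these values the valuation of each B_i^h is that of a run of
   B_i^h, hence lies in a zone reachable in its zone graph.  Right after alpha is executed its
   history clocks are equal and minimal, which gives the first disjunct of E(gamma); the nested
   E(gamma minus alpha) is inherited from E(gamma) before the step, as the recursion of E is
   stable under removing actions and the clocks outside alpha are unchanged.  Finally II(gamma)
   holds because a marked trap stays marked. *)
From Pilot Require Import Defs.
From mathcomp Require Import all_boot.
From Stdlib Require Import Reals Lra.

Set Implicit Arguments.
Unset Strict Implicit.
Unset Printing Implicit Defensive.

Section InteractionInequalities.
Variables (n : nat) (A : 'I_n -> finType).
Implicit Types (g : {set {set Act A}}) (X Y al : {set Act A}) (h : Act A -> R).

Lemma ominus_ominus g X Y : ominus (ominus g X) Y = ominus g (X :|: Y).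
Proof.
apply/setP => c; apply/imsetP/imsetP.
- case=> b'; rewrite inE => /andP[/imsetP[b] Hb -> HnY ->].
  move: Hb; rewrite inE => /andP[Hbg HnX].
  exists b; last by rewrite setDDl.
  by rewrite inE Hbg -subDset.
- case=> b; rewrite inE => /andP[Hbg HnXY ->].
  exists (b :\: X); last by rewrite setDDl.
  rewrite inE subDset HnXY andbT.
  apply/imsetP; exists b => //.
  rewrite inE Hbg /=; apply: contra HnXY => H.
  exact: subset_trans H (subsetUl _ _).
Qed.

Lemma ominus0 X : ominus set0 X = set0.
Proof. by apply/setP => c; rewrite inE; apply/imsetP => -[b]; rewrite inE in_set0. Qed.

Lemma mem_acts_ominus g X a :
  a \in acts (ominus g X) -> a \in acts g /\ a \notin X.
Proof.
case/bigcupP=> b /imsetP[b0]; rewrite inE => /andP[Hb0 _] ->.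
rewrite inE => /andP[HX Hb]; split=> //.
by apply/bigcupP; exists b0.
Qed.

Lemma acts_ominusS g X Y a :
  X \subset Y -> a \in acts (ominus g Y) -> a \in acts (ominus g X).
Proof.
move=> sXY /bigcupP[b /imsetP[b0]]; rewrite inE => /andP[Hb0 HnY] ->.
rewrite inE => /andP[Ha Hab].
apply/bigcupP; exists (b0 :\: X).
  apply/imsetP; exists b0 => //; rewrite inE Hb0 /=.
  by apply: contra HnY => H; apply: subset_trans H sXY.
by rewrite inE Hab andbT; apply: contra Ha; apply: (subsetP sXY).
Qed.

Lemma card_ominus g al : al \in g -> #|ominus g al| < #|g|.
Proof.
move=> Hal; apply: leq_ltn_trans (leq_imset_card _ _) _.
have sub : [set b in g | ~~ (b \subset al)] \subset g :\ al.
  apply/subsetP => b; rewrite !inE => /andP[Hb Hn]; rewrite Hb andbT.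
  by apply: contra Hn => /eqP ->.
exact: leq_ltn_trans (subset_leq_card sub) (proper_card (properD1 Hal)).
Qed.

Lemma Ehold_ominus h g X : Ehold h g -> Ehold h (ominus g X).
Proof.
move=> HE; elim: HE X => [|g0 al Hal Heq Hle HE IH] X.
  by rewrite ominus0; apply: E_empty.
have [sub|nsub] := boolP (al \subset X).
  by move: (IH X); rewrite ominus_ominus (setUidPr sub).
have XalE : X :|: (al :\: X) = al :|: X.
  by apply/setP => x; rewrite !inE; case: (x \in X); case: (x \in al).
apply: (E_pick (al := al :\: X)).
- by apply/imsetP; exists al => //; rewrite inE Hal.
- by move=> a b; rewrite !inE => /andP[_ Ha] /andP[_ Hb]; apply: Heq.
- move=> a b; rewrite inE => /andP[_ Ha] Hb; apply: Hle => //.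
  move: Hb; rewrite ominus_ominus; apply: acts_ominusS.
  by rewrite XalE subsetUl.
- by rewrite ominus_ominus XalE -ominus_ominus; apply: IH.
Qed.

Lemma eq_in_Ehold h h' g : {in acts g, h =1 h'} -> Ehold h g -> Ehold h' g.
Proof.
move=> Hh HE; elim: HE h' Hh => [|g0 al Hal Heq Hle HE IH] h' Hh.
  exact: E_empty.
have in_acts a : a \in al -> a \in acts g0 by move=> Ha; apply/bigcupP; exists al.
apply: (E_pick (al := al)) => //.
- by move=> a b Ha Hb; rewrite -!Hh ?in_acts //; apply: Heq.
- move=> a b Ha Hb; rewrite -Hh ?in_acts // -Hh; first exact: Hle.
  by case: (mem_acts_ominus Hb).
- by apply: IH => a Ha; apply: Hh; case: (mem_acts_ominus Ha).
Qed.

Lemma Ehold_addr h g d : Ehold h g -> Ehold (fun a => h a + d)%R g.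
Proof.
elim=> [|g0 al Hal Heq Hle HE IH]; first exact: E_empty.
apply: (E_pick (al := al)) => //.
- by move=> a b Ha Hb; rewrite (Heq a b).
- by move=> a b Ha Hb; have := Hle a b Ha Hb; lra.
Qed.

Lemma Ehold_cst k g : Ehold (fun=> k) g.
Proof.
move: {2}#|g|.+1 (ltnSn #|g|) => m; elim: m g => [|m IH] g // ltgm.
have [->|/set0Pn[al Hal]] := eqVneq g set0; first exact: E_empty.
apply: (E_pick (al := al)) => //; first by move=> *; apply: Rle_refl.
by apply: IH; apply: leq_trans (card_ominus Hal) _; rewrite -ltnS.
Qed.

Lemma Ehold_reset h g al : al \in g -> (forall a, 0 <= h a)%R -> Ehold h g ->
  Ehold (fun a => if a \in al then 0 else h a)%R g.
Proof.
move=> Hal h_ge0 HE; apply: (E_pick (al := al)) => //.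
- by move=> a b -> ->.
- by move=> a b -> _; case: (b \in al); [apply: Rle_refl | apply: h_ge0].
- apply: eq_in_Ehold (Ehold_ominus al HE) => a Ha.
  by case: (mem_acts_ominus Ha) => _ /negbTE ->.
Qed.

End InteractionInequalities.

Section ZoneGraphRuns.
Variables (C A : finType) (T : TA C A).

(* Every reachable symbolic state is the normalisation of an elapse zone; remembering the
   zone before normalisation makes the invariant stable under further delays. *)
Definition CI_elapse (l : loc T) (w : valuation C) : Prop :=
  exists P, zreach T l (norm T (elapse T l P)) /\ elapse T l P w.

Lemma sub_norm (Z0 : zone C) v : Z0 v -> norm T Z0 v.
Proof. by move=> Z0v x y c s _; apply. Qed.

Lemma elapse_refl l (Z0 : zone C) v : Z0 v -> elapse T l Z0 v.
Proof.
move=> Z0v; exists v, 0%R; split=> //; split; first exact: Rle_refl.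
by split; [move=> x; rewrite Rplus_0_r | left].
Qed.

Lemma eq_tpc_sat s (v v' : valuation C) :
  (forall x, v x = v' x) -> tpc_sat s v -> tpc_sat s v'.
Proof. by move=> vv' Hv p Hp; rewrite -vv'; apply: Hv. Qed.

Lemma elapse_delay l (Z0 : zone C) w d w' :
  elapse T l Z0 w -> (0 <= d)%R ->
  (forall t, (0 <= t <= d)%R -> tpc_sat (tpc T l) (shift w t)) ->
  (forall z, w' z = w z + d)%R -> elapse T l Z0 w'.
Proof.
case=> u [D [Z0u [D_ge0 [Hw tpcD]]]] d_ge0 tpcd Hw'.
exists u, (D + d)%R; split=> //; split; first lra.
split; first by move=> z; rewrite Hw' Hw; ring.
right=> t Ht.
have late : (0 <= t - D <= d)%R -> tpc_sat (tpc T l) (shift u t).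
  by move=> Hs; apply: eq_tpc_sat (tpcd _ Hs) => x; rewrite /shift Hw; ring.
case: tpcD => [D0|early]; first by apply: late; rewrite D0; lra.
by case: (Rle_lt_dec t D) => HtD; [apply: early | apply: late]; lra.
Qed.

Lemma CI_elapse_CI l w : CI_elapse l w -> CI T l w.
Proof. by case=> P [HP Pw]; exists (norm T (elapse T l P)); split=> //; apply: sub_norm. Qed.

Lemma CI_elapse_ext l w w' : (forall z, w z = w' z) -> CI_elapse l w -> CI_elapse l w'.
Proof.
move=> ww' [P [HP [u [D [Pu [D_ge0 [Hw tpcD]]]]]]].
by exists P; split=> //; exists u, D; do 3!split=> //; move=> z; rewrite -ww'.
Qed.

Lemma CI_elapse_init w : Defs.nonneg w -> sat w (c0 T) -> CI_elapse (l0 T) w.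
Proof. by move=> w_ge0 Hw; exists (init_zone T); split; [apply: zr_init | apply: elapse_refl]. Qed.

Lemma CI_elapse_delay l w d w' : CI_elapse l w -> (0 <= d)%R ->
  (forall t, (0 <= t <= d)%R -> tpc_sat (tpc T l) (shift w t)) ->
  (forall z, w' z = w z + d)%R -> CI_elapse l w'.
Proof. by move=> [P [HP Pw]] d_ge0 tpcd Hw'; exists P; split=> //; apply: elapse_delay Pw d_ge0 tpcd Hw'. Qed.

Lemma CI_elapse_step l w a g r l' w' : CI_elapse l w ->
  List.In (l, a, g, r, l') (edges T) -> sat w g ->
  (forall z, w' z = reset r w z) -> tpc_sat (tpc T l') w' -> CI_elapse l' w'.
Proof.
move=> [P [HP Pw]] Hedge Hg Hw' tpcw'.
exists (disc_post T (norm T (elapse T l P)) g r l'); split; first exact: zr_step HP Hedge.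
by apply: elapse_refl; exists w; split; first exact: sub_norm.
Qed.

End ZoneGraphRuns.
Arguments CI_elapse {C A} T l w.

Lemma sat_cmap (C D : Type) (f : C -> D) (w : valuation D) g :
  sat w (cmap f g) <-> sat (fun x => w (f x)) g.
Proof. by elim: g => [|x o k|g1 IH1 g2 IH2] //=; rewrite IH1 IH2. Qed.

Lemma inr_notin_map_inl (X Y : eqType) (y : Y) (r : seq X) :
  (inr y \in [seq inl x | x <- r]) = false.
Proof. by elim: r => [|x r IH] //=; rewrite in_cons IH orbF. Qed.

Section HistoryClocks.
Variables (C A : finType) (B : TA C A).

Lemma tpc_sat_hist (l : loc B) (w : valuation (C + option A)%type) :
  tpc_sat (tpc B l) (fun x => w (inl x)) -> tpc_sat (tpc (hist B) l) w.
Proof.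
rewrite /tpc_sat /=; elim: (tpc B l) => [|q s IH] H p //=.
case=> [<-|Hp]; first by apply: (H q); left.
by apply: IH => // p' Hp'; apply: H; right.
Qed.

Lemma hist_edge l a g r l' :
  List.In (l, a, g, r, l') (edges B) ->
  List.In (l, a, cmap inl g, inr (Some a) :: map inl r, l') (edges (hist B)).
Proof.
rewrite /hist /=; elim: (edges B) => [|e s IH] //=.
by case=> [->|H]; [left | right; apply: IH].
Qed.

Lemma sat_c0_hist (w : valuation (C + option A)%type) :
  sat (fun x => w (inl x)) (c0 B) -> w (inr None) = 0%R ->
  (forall a, 0 < w (inr (Some a)))%R -> sat w (c0 (hist B)).
Proof.
move=> Hc0 h0E ha_gt0; rewrite /hist /=; split; first exact/sat_cmap.
split; first by rewrite /cmp_sat h0E.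
by elim: (enum A) => [|a s IH] //=; split.
Qed.

End HistoryClocks.

Section SystemRuns.
Variables (n : nat) (C A : 'I_n -> finType) (B : forall i, TA (C i) (A i))
  (gamma : {set {set Act A}}).
Hypothesis gamma_interaction : forall al, al \in gamma -> interaction al.

Definition hv_init (c : option (Act A)) : R := if c is Some _ then 1%R else 0%R.

Definition hv_reset (hv : option (Act A) -> R) (al : {set Act A}) c : R :=
  if c is Some a then (if a \in al then 0%R else hv c) else hv None.

Definition hist_inv (l : gloc B) (v : valuation (Clk C)) : Prop :=
  exists hv : option (Act A) -> R, (forall c, 0 <= hv c)%R /\
    (forall i, CI_elapse (hist (B i)) (l i) (hist_val v hv (i:=i))) /\
    Ehold (fun a => hv (Some a)) gamma.

(* Only the history clock of a itself is reset, since al holds at most one action of B_i. *)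
Lemma hist_val_reset al i (a : A i) r (v v' : valuation (Clk C)) hv :
  interaction al -> Tagged A a \in al ->
  (forall x, v' (Tagged C x) = reset r (restr v (i:=i)) x) ->
  forall z, hist_val v' (hv_reset hv al) (i:=i) z =
            reset (inr (Some a) :: map inl r) (hist_val v hv (i:=i)) z.
Proof.
move=> [_ one_act] Ha Hv' [x|[b|]] /=.
- by rewrite /reset in_cons (mem_map inl_inj) Hv' /reset /restr.
- rewrite /reset in_cons inr_notin_map_inl orbF.
  have [->|nba] := eqVneq b a; first by rewrite eqxx Ha.
  have -> : (inr (Some b) == inr (Some a) :> (C i + option (A i))%type) = false.
    by apply/eqP => -[] /eqP; rewrite (negbTE nba).
  by case: ifP => // Hb; case/eqP: nba; apply: one_act Hb Ha.
- by rewrite /reset in_cons inr_notin_map_inl.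
Qed.

Lemma hist_val_idle (al : {set Act A}) i (v v' : valuation (Clk C)) hv :
  (forall b : A i, Tagged A b \notin al) ->
  (forall x : C i, v' (Tagged C x) = v (Tagged C x)) ->
  forall z, hist_val v' (hv_reset hv al) (i:=i) z = hist_val v hv (i:=i) z.
Proof. by move=> idle Hv' [x|[b|]] //=; rewrite ?Hv' ?(negbTE (idle b)). Qed.

Lemma hist_inv_init v : Defs.nonneg v -> (forall i, sat (restr v (i:=i)) (c0 (B i))) ->
  hist_inv (fun i => l0 (B i)) v.
Proof.
move=> v_ge0 Hc0; exists hv_init; split; first by case=> [a|]; rewrite /hv_init; lra.
split; last exact: Ehold_cst.
move=> i; apply: CI_elapse_init; last first.
  by apply: sat_c0_hist; [exact: Hc0 | by [] | move=> a /=; lra].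
by case=> [x|[a|]] /=; [apply: v_ge0 | lra | lra].
Qed.

Lemma hist_inv_delay l v d : hist_inv l v -> (0 <= d)%R ->
  (forall t, (0 <= t <= d)%R -> forall i, tpc_sat (tpc (B i) (l i)) (restr (shift v t) (i:=i))) ->
  hist_inv l (shift v d).
Proof.
move=> [hv [hv_ge0 [Hci HE]]] d_ge0 tpcd.
exists (fun c => hv c + d)%R; split; first by move=> c; have := hv_ge0 c; lra.
split; last exact: Ehold_addr.
move=> i; apply: (CI_elapse_delay (Hci i) d_ge0); last by case=> [x|[a|]].
by move=> t Ht; apply: tpc_sat_hist; apply: tpcd.
Qed.

Lemma hist_inv_act l v al (l' : gloc B) (v' : valuation (Clk C)) :
  hist_inv l v -> al \in gamma ->
  (forall i,
     (exists (a : A i) g r, Tagged A a \in al /\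
        List.In (l i, a, g, r, l' i) (edges (B i)) /\
        sat (restr v (i:=i)) g /\
        (forall x : C i, v' (Tagged C x) = reset r (restr v (i:=i)) x))
     \/
     ((forall a : A i, Tagged A a \notin al) /\ l' i = l i /\
        (forall x : C i, v' (Tagged C x) = v (Tagged C x)))) ->
  (forall i, tpc_sat (tpc (B i) (l' i)) (restr v' (i:=i))) ->
  hist_inv l' v'.
Proof.
move=> [hv [hv_ge0 [Hci HE]]] Hal Hcomp tpcv'.
exists (hv_reset hv al); split.
  by case=> [a|]; rewrite /hv_reset; [case: ifP => _; [lra | apply: hv_ge0] | apply: hv_ge0].
split; last by apply: Ehold_reset => // a; apply: hv_ge0.
move=> i; case: (Hcomp i) => [[a [g [r [Ha [Hedge [Hg Hv']]]]]] | [idle [l'E Hv']]].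
- apply: CI_elapse_step (Hci i) (hist_edge Hedge) _ _ _.
  + exact/sat_cmap.
  + exact: hist_val_reset (gamma_interaction Hal) Ha Hv'.
  + exact: tpc_sat_hist.
- rewrite l'E; apply: CI_elapse_ext (Hci i) => z.
  by rewrite (hist_val_idle hv idle Hv').
Qed.

Lemma creach_hist_inv l v : creach B gamma l v -> hist_inv l v.
Proof.
elim=> {l v}; first exact: hist_inv_init.
  by move=> l v d _; apply: hist_inv_delay.
by move=> l v al l' v' _; apply: hist_inv_act.
Qed.

Lemma creach_II l v : creach B gamma l v -> II B gamma l.
Proof.
elim=> {l v} [v _ _ S _ [i Hi]|//|l v al l' v' _ IH Hal Hcomp _ S trapS initS].
  by exists i.
case: (IH S trapS initS) => i Si.
pose part j := [exists a : A j, Tagged A a \in al].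
have [[a [g [r [Ha [Hedge _]]]]] | [_ [l'E _]]] := Hcomp i; last by exists i; rewrite l'E.
pose pre j := if part j then Some (l j) else None.
pose post j := if part j then Some (l' j) else None.
have move_al : jmove gamma pre post.
  exists al => // j; rewrite /pre /post.
  case: (Hcomp j) => [[b [g' [r' [Hb [Hedge' _]]]]] | [idle _]].
    have -> : part j by apply/existsP; exists b.
    by exists b, g', r'.
  have -> // : part j = false.
  by apply/negbTE/existsP => -[b Hb]; move: (idle b); rewrite Hb.
have part_i : part i by apply/existsP; exists a.
have [|j [lj [postj Sj]]] := trapS pre post move_al.
  by exists i, (l i); rewrite /pre part_i.
by exists j; move: postj; rewrite /post; case: (part j) => // -[->].
Qed.

End SystemRuns.

Theorem corollary1 (n : nat) (C A : 'I_n -> finType)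
    (B : forall i, TA (C i) (A i)) (gamma : {set {set Act A}})
    (Hgamma : forall al, al \in gamma -> interaction al) :
  @is_invariant n C A B gamma (@Phi n C A B gamma).
Proof.
move=> l v Hreach.
have [hv [hv_ge0 [Hci HE]]] := creach_hist_inv Hgamma Hreach.
exists hv; do !split=> //.
- by move=> i; apply: CI_elapse_CI.
- exact: creach_II Hreach.
Qed.
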